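(* Consider the ASYMM algorithm described in the context, and let $t_1,t_2,\dots$ be the increasing subsequence of universal iterations at which a multiplier update (task T2) is performed, with $t_1$ the first such iteration. Then, for every $k=0,1,\dots$, between $t_{kN+1}$ and $t_{(k+1)N+1}$ every node performs task T1 at least once.
   Context: Problem: minimize $\sum_{i=1}^N f_i(x)$ over $x\in\mathbb{R}^n$ subject to $h_i(x)=0$ and $g_i(x)\le 0$ for $i=1,\dots,N$, with $f_i,h_i,g_i:\mathbb{R}^n\to\mathbb{R}$ private to node $i$. The nodes communicate over a fixed, undirected, connected graph $\mathcal{G}=(\mathcal{V},\mathcal{E})$, $\mathcal{V}=\{1,\dots,N\}$, with diameter $d_G$; $\mathcal{N}_i=\{j:(i,j)\in\mathcal{E}\}\cup\{i\}$ and $d_i=|\mathcal{N}_i|$. With multipliers $\nu_{ij}\in\mathbb{R}^n$, $\lambda_i,\mu_i\in\mathbb{R}$ and positive penalty parameters $\rho_{ij},\rho_{E_i},\rho_{I_i}$, the local Augmented Lagrangian of node $i$ is $\tilde{\mathcal{L}}_i=f_i(x_i)+\sum_{j\in\mathcal{N}_i\setminus\{i\}}[x_i^\top(\nu_{ij}-\nu_{ji})+\frac{\rho_{ij}+\rho_{ji}}{2}\|x_i-x_j\|^2]+\lambda_ih_i(x_i)+\frac{\rho_{E_i}}{2}\|h_i(x_i)\|^2+\frac{1}{2\rho_{I_i}}(\max\{0,\mu_i+\rho_{I_i}g_i(x_i)\}^2-\mu_i^2)$. Asynchronous model: each node alternates between IDLE mode (listening, possibly updating local variables) and AWAKE mode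 (computing and broadcasting), triggered by a local clock with waiting times $T_i\le\bar T_i$ for some constant $\bar T_i$; only one node can be awake at each time instant. Each awakening is an iteration $t\in\mathbb{N}$ of a universal discrete time, and $i_t$ is the node awake at iteration $t$. ASYMM: node $i$ stores $x_i$, copies $x_j$ of neighbors' variables, $\lambda_i,\mu_i,\nu_{ij}$ and received $\nu_{ji}$ ($j\in\mathcal{N}_i\setminus\{i\}$), penalties, a constant $L_i>0$, a tolerance $\epsilon_i$, a flag $M_{done}$ (initially $0$) and a matrix $S_i\in\{0,1\}^{d_G\times d_i}$ (initially zero) whose column $j|_i$ refers to neighbor $j$ and column $d_i$ to node $i$. When AWAKE: (T1) if $\prod_{l=1}^{d_i}S_i[d_G,l]\ne1$ and $M_{done}=0$: set $x_i\gets x_i-\frac1{L_i}\nabla_{x_i}\tilde{\mathcal{L}}_i$; if $\|\nabla_{x_i}\tilde{\mathcal{L}}_i\|\le\epsilon_i$ set $S_i[1,d_i]\gets1$; set $S_i[l,d_i]\gets\prod_{b=1}^{d_i}S_i[l-1,b]$ for $l=2,\dots,d_G$; broadcast $x_i$ and $S_i[:,d_i]$ to neighbors. (T2) Then, if $\prod_{l=1}^{d_i}S_i[d_G,l]=1$ and $M_{done}=0$: set $\nu_{ij}\gets\nu_{ij}+\rho_{ij}(x_i-x_j)$ for $j\in\mathcal{N}_i\setminus\{i\}$, $\lambda_i\gets\lambda_i+\rho_{E_i}h_i(x_i)$, $\mu_i\gets\max\{0,\mu_i+\rho_{I_i}g_i(x_i)\}$, update (non-decreasingly) $\rho_{E_i},\rho_{I_i},\rho_{ij}$,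 set $M_{done}\gets1$, broadcast $\nu_{ij},\rho_{ij}$ to each neighbor $j$. When IDLE: if $S_j[:,d_j]$ is received from a neighbor $j$ and no new $\nu_{ji}$ has already been received, set $S_i[l,j|_i]\gets S_j[l,d_j]$, $l=1,\dots,d_G$; if $\nu_{ji},\rho_{ji}$ are received from a neighbor $j$, set all entries of row $d_G$ of $S_i$ to $1$; if a new $x_j$ is received, update the local copy of $x_j$; if $M_{done}=1$ and new $\nu_{ji}$ has been received from all neighbors, set $M_{done}\gets0$, $S_i\gets0$ and update $\epsilon_i$. *)

From mathcomp Require Import all_boot all_order all_algebra.
From mathcomp Require Import all_classical all_reals all_analysis.
Set Implicit Arguments. Unset Strict Implicit. Unset Printing Implicit Defensive.
Import Order.TTheory GRing.Theory Num.Theory.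
Local Open Scope ring_scope.

Definition dist_le {N : nat} (adj : rel 'I_N) (i j : 'I_N) (d : nat) : Prop :=
  exists p : seq 'I_N, [/\ path adj i p, last i p = j & (size p <= d)%N].

Definition undirected_connected {N : nat} (adj : rel 'I_N) : Prop :=
  [/\ symmetric adj, irreflexive adj &
      forall i j : 'I_N, exists d, dist_le adj i j d].

Definition is_diameter {N : nat} (adj : rel 'I_N) (dG : nat) : Prop :=
  (forall i j : 'I_N, dist_le adj i j dG) /\
  (exists i j : 'I_N, forall d, (d < dG)%N -> ~ dist_le adj i j d).

Definition Nb {N : nat} (adj : rel 'I_N) (i : 'I_N) : pred 'I_N :=
  [pred j | adj i j || (j == i)].

Definition dotv {R : realType} {n : nat} (u v : 'rV[R]_n) : R :=
  \sum_(k < n) u 0 k * v 0 k.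
Definition sqnorm {R : realType} {n : nat} (u : 'rV[R]_n) : R := dotv u u.
Definition enorm {R : realType} {n : nat} (u : 'rV[R]_n) : R :=
  Num.sqrt (sqnorm u).

Definition grad {R : realType} {n : nat} (F : 'rV[R]_n -> R) (y : 'rV[R]_n)
  : 'rV[R]_n :=
  \row_(k < n) derive1 (fun s : R => F (y + s *: delta_mx 0 k)) 0.

(*   xc i j       : copy at node i of x_j                                      *)
(*   nu i j       : nu_ij (stored at i)                                        *)
(*   nuc i j      : received copy at node i of nu_ji                           *)
(*   rho i j      : rho_ij (stored at i); rhoc i j : received copy of rho_ji   *)
(*   S i l j      : entry of S_i in row l (1 <= l <= dG) and in the column of  *)
(*                  j in N_i (column d_i being the one of i itself)            *)
(*   recv i j     : a new nu_ji has been received by i (since last reset)      *)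
Record state (R : realType) (N n : nat) := State {
  x : 'I_N -> 'rV[R]_n;
  xc : 'I_N -> 'I_N -> 'rV[R]_n;
  lam : 'I_N -> R;
  mu : 'I_N -> R;
  nu : 'I_N -> 'I_N -> 'rV[R]_n;
  nuc : 'I_N -> 'I_N -> 'rV[R]_n;
  rho : 'I_N -> 'I_N -> R;
  rhoc : 'I_N -> 'I_N -> R;
  rhoE : 'I_N -> R;
  rhoI : 'I_N -> R;
  eps : 'I_N -> R;
  Md : 'I_N -> bool;
  S : 'I_N -> nat -> 'I_N -> bool;
  recv : 'I_N -> 'I_N -> bool }.

Section ASYMM.
Context {R : realType} {N n : nat}.
Context (adj : rel 'I_N) (dG : nat).
Context (f h g : 'I_N -> 'rV[R]_n -> R) (Lc : 'I_N -> R).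

Implicit Types (st : state R N n) (a i j : 'I_N).

Definition Ltil st i (y : 'rV[R]_n) : R :=
  f i y
  + \sum_(j | adj i j)
      (dotv y (nu st i j - nuc st i j)
       + (rho st i j + rhoc st i j) / 2 * sqnorm (y - xc st i j))
  + lam st i * h i y
  + rhoE st i / 2 * (h i y) ^+ 2
  + (2 * rhoI st i)^-1 *
      ((Num.max 0 (mu st i + rhoI st i * g i y)) ^+ 2 - (mu st i) ^+ 2).

Definition rowfull (Sm : 'I_N -> nat -> 'I_N -> bool) i (l : nat) : bool :=
  [forall j, (j \in Nb adj i) ==> Sm i l j].

Definition doT1 st a : bool := ~~ rowfull (S st) a dG && ~~ Md st a.

Definition gradL st a : 'rV[R]_n := grad (Ltil st a) (x st a).

Fixpoint newcol st a (small : bool) (l : nat) : bool :=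
  match l with
  | 0 => S st a 0 a
  | 1 => S st a 1 a || small
  | l'.+1 => [forall j, (j \in Nb adj a) ==>
                 (if j == a then newcol st a small l' else S st a l' j)]
  end.

Definition Scol st a (l : nat) : bool :=
  if doT1 st a && (1 <= l <= dG)%N
  then newcol st a (enorm (gradL st a) <= eps st a) l
  else S st a l a.

Definition x1 st a : 'rV[R]_n :=
  if doT1 st a then x st a - (Lc a)^-1 *: gradL st a else x st a.

Definition S1 st a : 'I_N -> nat -> 'I_N -> bool :=
  fun i l j => if (i == a) && (j == a) then Scol st a l else S st i l j.

Definition doT2 st a : bool := rowfull (S1 st a) a dG && ~~ Md st a.

(* One universal iteration: node a is awake (T1 then T2), its broadcasts are
   received by its neighbours (IDLE rules), and then every node whose reset
   condition holds resets.  rE', rI', rho' are the new (non-decreasing)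
   penalty parameters chosen by a in T2, eps' the new tolerances. *)
Definition step st a (rE' rI' : R) (rho' : 'I_N -> R) (eps' : 'I_N -> R)
  : state R N n :=
  let T1 := doT1 st a in
  let T2 := doT2 st a in
  let xa := x1 st a in
  let x2 := fun i => if i == a then xa else x st i in
  let nu2 := fun i j => if T2 && (i == a) && adj a j
                        then nu st a j + rho st a j *: (xa - xc st a j)
                        else nu st i j in
  let lam2 := fun i => if T2 && (i == a) then lam st a + rhoE st a * h a xa
                       else lam st i in
  let mu2 := fun i => if T2 && (i == a)
                      then Num.max 0 (mu st a + rhoI st a * g a xa)
                      else mu st i in
  let rho2 := fun i j => if T2 && (i == a) && adj a j then rho' j
                         else rho st i j in
  let rhoE2 := fun i => if T2 && (i == a) then rE' else rhoE st i in
  let rhoI2 := fun i => if T2 && (i == a) then rI' else rhoI st i in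
  let Md2 := fun i => if T2 && (i == a) then true else Md st i in
  let xc2 := fun i j => if T1 && adj a i && (j == a) then xa else xc st i j in
  let S2 := fun i l j =>
    if T2 && adj a i && (l == dG) then true
    else if T1 && adj a i && (j == a) && ~~ recv st i a && (1 <= l <= dG)%N
    then Scol st a l
    else S1 st a i l j in
  let recv2 := fun i j => if T2 && adj a i && (j == a) then true
                          else recv st i j in
  let nuc2 := fun i j => if T2 && adj a i && (j == a) then nu2 a i
                         else nuc st i j in
  let rhoc2 := fun i j => if T2 && adj a i && (j == a) then rho2 a i
                          else rhoc st i j in
  let rst := fun i => Md2 i && [forall j, adj i j ==> recv2 i j] in
  {| x := x2; xc := xc2; lam := lam2; mu := mu2; nu := nu2; nuc := nuc2;
     rho := rho2; rhoc := rhoc2; rhoE := rhoE2; rhoI := rhoI2;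
     eps := fun i => if rst i then eps' i else eps st i;
     Md := fun i => if rst i then false else Md2 i;
     S := fun i l j => if rst i then false else S2 i l j;
     recv := fun i j => if rst i then false else recv2 i j |}.

Definition init_ok st : Prop :=
  [/\ (forall i, Md st i = false),
      (forall i l j, S st i l j = false),
      (forall i j, recv st i j = false),
      (forall i j, adj i j -> 0 < rho st i j /\ 0 < rhoc st i j) &
      (forall i, 0 < rhoE st i /\ 0 < rhoI st i)].

(* an execution of ASYMM: sequence of states along the universal iterations,
   sched t = i_t the node awake at iteration t *)
Definition asymm_run (st : nat -> state R N n) (sched : nat -> 'I_N) : Prop :=
  init_ok (st 0%N) /\
  forall t : nat, exists (rE' rI' : R) (rho' eps' : 'I_N -> R),
    [/\ rhoE (st t) (sched t) <= rE', rhoI (st t) (sched t) <= rI',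
        (forall j, adj (sched t) j -> rho (st t) (sched t) j <= rho' j) &
        st t.+1 = step (st t) (sched t) rE' rI' rho' eps'].

Definition T1_at (run : nat -> state R N n) (sched : nat -> 'I_N) (t : nat) : bool :=
  doT1 (run t) (sched t).
Definition T2_at (run : nat -> state R N n) (sched : nat -> 'I_N) (t : nat) : bool :=
  doT2 (run t) (sched t).

(* t is the m-th (m >= 1) iteration at which a multiplier update (T2) occurs,
   i.e. t = t_m *)
Definition nth_T2 (run : nat -> state R N n) (sched : nat -> 'I_N) (m t : nat)
  : Prop :=
  (1 <= m)%N /\ T2_at run sched t /\
  count (T2_at run sched) (iota 0 t) = m.-1.

End ASYMM.

(* Asynchronous timing model: iteration t happens at time tau t (strictly
   increasing, so one node awake per instant); each node i wakes up at least
   once in every time window of length Tbar i. *)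
Definition timing_ok {R : realType} {N : nat} (sched : nat -> 'I_N)
  (tau : nat -> R) (Tbar : 'I_N -> R) : Prop :=
  [/\ 0 <= tau 0%N, (forall t, tau t < tau t.+1), (forall i, 0 < Tbar i) &
      forall (i : 'I_N) (s : R), 0 <= s ->
        exists t, sched t = i /\ s < tau t <= s + Tbar i].

From mathcomp Require Import all_boot all_order all_algebra.
From mathcomp Require Import all_classical all_reals all_analysis.
From mathcomp Require Import zify.
Import Order.TTheory GRing.Theory Num.Theory.
Local Open Scope ring_scope.

(* Call the round of node i the number of resets it has performed so far.
   The invariant of ASYMM is that an entry of row l of S_i in the column of
   j certifies that every node within distance l - 1 of j has performed T1
   during its own round equal to the current round of i, while the rounds of
   neighbours and the numbers of multiplier updates of any two nodes never
   drift apart by more than one.  Since row dG must be full before T2, a node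
   performing its (m+1)-th update knows that every node has performed T1 in
   its round m.  By the drift bound, at t_(kN+1) every node has performed
   exactly k updates, and at t_((k+1)N+1) exactly k + 1; hence every node
   performs T1 in its round k + 1 between these two iterations. *)

Lemma count_sum_partition (I : Type) (T : finType) (lbl : I -> T)
    (p : pred I) (r : seq I) :
  count p r = (\sum_(w : T) count (fun u => p u && (lbl u == w)) r)%N.
Proof.
elim: r => [|u r IH] /=; first by rewrite big1.
rewrite IH big_split /=; congr (_ + _)%N.
rewrite (bigD1 (lbl u)) //= eqxx andbT big1 ?addn0 // => w /negbTE.
by rewrite eq_sym => ->; rewrite andbF.
Qed.

Lemma sum_balanced_const (T : finType) (c : T -> nat) (a : T) (K : nat) :
  (forall w, c a <= c w <= (c a).+1)%N -> (\sum_w c w = K * #|T|)%N ->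
  forall w, c w = K.
Proof.
move=> bal sumK; set m := c a.
have card_gt0 : (0 < #|T|)%N by apply/card_gt0P; exists a.
have sum_lo : (m * #|T| <= \sum_w c w)%N.
  by rewrite mulnC -sum_nat_const; apply: leq_sum => w _; case/andP: (bal w).
have sum_hi : (\sum_w c w < m.+1 * #|T|)%N.
  rewrite mulnC -sum_nat_const (bigD1 a) // [X in (_ < X)%N](bigD1 a) //=.
  by rewrite -addSn leq_add // leq_sum // => w _; case/andP: (bal w).
have mK : m = K.
  apply/eqP; rewrite eqn_leq -(leq_pmul2r card_gt0) -sumK sum_lo /=.
  by rewrite -ltnS -(ltn_pmul2r card_gt0) -sumK.
move=> w; have /andP[lo _] := bal w.
have rest : (\sum_(v | v != w) m <= \sum_(v | v != w) c v)%N.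
  by apply: leq_sum => v _; case/andP: (bal v).
have split_m : (\sum_(v : T) m = m + \sum_(v | v != w) m)%N.
  by rewrite (bigD1 w).
have split_c : (\sum_v c v = c w + \sum_(v | v != w) c v)%N.
  by rewrite (bigD1 w).
have sum_m : (\sum_(v : T) m = #|T| * m)%N by rewrite sum_nat_const.
move: lo rest sumK split_m split_c sum_m; rewrite -/m mK; lia.
Qed.

Section Walks.
Context {N : nat} {adj : rel 'I_N}.

Lemma dist_le0 i j : dist_le adj i j 0 -> j = i.
Proof. by case=> -[|? ?] [_ <-]. Qed.

Lemma dist_leS i j l : dist_le adj i j l.+1 ->
  j = i \/ exists2 k, adj i k & dist_le adj k j l.
Proof.
case=> -[|k p] [/= ikp <- sz]; [by left | right].
by case/andP: ikp => ik kp; exists k => //; exists p.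
Qed.

Lemma dist_le_refl i l : dist_le adj i i l.
Proof. by exists [::]. Qed.

Lemma diameter_gt0 dG : (1 < N)%N -> (forall i j, dist_le adj i j dG) ->
  (0 < dG)%N.
Proof.
move=> N_gt1 diam; rewrite lt0n; apply/eqP => dG0.
move: (diam (Ordinal (ltnW N_gt1)) (Ordinal N_gt1)).
by rewrite dG0 => /dist_le0 /(congr1 val).
Qed.

End Walks.

Section ASYMM_run.
Context {R : realType} {N n : nat} {adj : rel 'I_N} {dG : nat}
  {f h g : 'I_N -> 'rV[R]_n -> R} {Lc : 'I_N -> R}
  {sched : nat -> 'I_N} {st : nat -> state R N n}.

Local Notation T1 := (doT1 adj dG).
Local Notation T2 := (doT2 adj dG f h g).
Implicit Types (s : state R N n) (a i j w : 'I_N).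

(* The let-bound [Md2], [recv2], [S2] and [rst] of [step]: the state of node
   i after the tasks of the awake node a and the receptions, and whether i
   then resets. *)
Definition Md2 s a i := (T2 s a && (i == a)) || Md s i.
Definition recv2 s a i j := (T2 s a && adj a i && (j == a)) || recv s i j.
Definition rst s a i := Md2 s a i && [forall j, adj i j ==> recv2 s a i j].
Definition S2 s a i l j :=
  if T2 s a && adj a i && (l == dG) then true
  else if T1 s a && adj a i && (j == a) && ~~ recv s i a && (1 <= l <= dG)%N
  then Scol adj dG f h g s a l
  else S1 adj dG f h g s a i l j.

Lemma doT1_Md {s a} : T1 s a -> Md s a = false.
Proof. by case/andP=> _ /negbTE. Qed.

Lemma doT2_Md {s a} : T2 s a -> Md s a = false.
Proof. by case/andP=> _ /negbTE. Qed.

Hypothesis adj_sym : symmetric adj.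
Hypothesis adj_irr : irreflexive adj.
Hypothesis dG_gt0 : (0 < dG)%N.
Hypothesis diam : forall i j, dist_le adj i j dG.
Hypothesis run : asymm_run adj dG f h g Lc st sched.

Local Notation T2t := (T2_at adj dG f h g st sched).

Lemma adj_neq a j : adj a j -> (j == a) = false.
Proof. by apply: contraTF => /eqP->; rewrite adj_irr. Qed.

Lemma Md_stS t i :
  Md (st t.+1) i =
  if rst (st t) (sched t) i then false else Md2 (st t) (sched t) i.
Proof. by have [? [? [? [? [_ _ _ ->]]]]] := run.2 t. Qed.

Lemma recv_stS t i j :
  recv (st t.+1) i j =
  if rst (st t) (sched t) i then false else recv2 (st t) (sched t) i j.
Proof. by have [? [? [? [? [_ _ _ ->]]]]] := run.2 t. Qed.

Lemma S_stS t i l j :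
  S (st t.+1) i l j =
  if rst (st t) (sched t) i then false else S2 (st t) (sched t) i l j.
Proof. by have [? [? [? [? [_ _ _ ->]]]]] := run.2 t. Qed.

Definition updates w t :=
  count (fun u => T2 (st u) (sched u) && (sched u == w)) (iota 0 t).

Definition round w t := (updates w t - Md (st t) w)%N.

Lemma updatesS w t :
  updates w t.+1 = (updates w t + (T2 (st t) (sched t) && (sched t == w)))%N.
Proof. by rewrite /updates -addn1 iotaD count_cat /= add0n addn0. Qed.

Lemma updates_mono w : {homo updates w : t t' / (t <= t')%N}.
Proof.
by apply: homo_leq leqnn leq_trans _ => t; rewrite updatesS leq_addr.
Qed.

Lemma count_T2_updates t : count T2t (iota 0 t) = (\sum_w updates w t)%N.
Proof. exact: count_sum_partition. Qed.

Lemma Md_updates_gt0 t i : Md (st t) i -> (0 < updates i t)%N.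
Proof.
elim: t i => [|t IH] i; first by case: run.1 => ->.
rewrite Md_stS updatesS /Md2; case: rst => //= /orP[/andP[T2a /eqP->] | /IH].
  by rewrite T2a eqxx addn1.
by move/leq_trans; apply; rewrite leq_addr.
Qed.

Lemma roundS t i : round i t.+1 = (round i t + rst (st t) (sched t) i)%N.
Proof.
rewrite /round Md_stS updatesS /rst /Md2.
case: (boolP (T2 (st t) (sched t) && (i == sched t))) =>
  [/andP[T2a /eqP->] | no_upd].
  by rewrite T2a eqxx (doT2_Md T2a) /=; case: [forall _, _] => /=; lia.
rewrite (eq_sym (sched t) i) (negbTE no_upd) /= addn0.
have := @Md_updates_gt0 t i; case: (Md (st t) i) => /= [/(_ isT) | _].
  by case: [forall _, _] => /=; lia.
by rewrite addn0.
Qed.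

Lemma round_mono i : {homo round i : t t' / (t <= t')%N}.
Proof.
by apply: homo_leq leqnn leq_trans _ => t; rewrite roundS leq_addr.
Qed.

Lemma round_le_updates w t : (round w t <= updates w t)%N.
Proof. exact: leq_subr. Qed.

Lemma round_updates w t : Md (st t) w = false -> round w t = updates w t.
Proof. by rewrite /round => ->; rewrite subn0. Qed.

Definition did_T1 w m t :=
  exists u,
  [/\ (u < t)%N, sched u = w, T1_at adj dG st sched u & updates w u = m].

Lemma did_T1_mono w m t t' : (t <= t')%N -> did_T1 w m t -> did_T1 w m t'.
Proof.
by move=> le_tt' [u [lt_ut *]]; exists u; split=> //; exact: leq_trans le_tt'.
Qed.

Lemma did_T1_now t :
  T1 (st t) (sched t) -> did_T1 (sched t) (round (sched t) t) t.+1.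
Proof.
by move=> T1a; exists t; split; rewrite // round_updates ?(doT1_Md T1a).
Qed.

Lemma did_T1_round_le w m t : did_T1 w m t.+1 -> (m <= round w t)%N.
Proof.
case=> u [lt_ut <- T1u <-]; rewrite -round_updates ?(doT1_Md T1u) //.
exact: round_mono.
Qed.

Definition S_sound t := forall i j l w, j \in Nb adj i -> (1 <= l <= dG)%N ->
  S (st t) i l j -> dist_le adj j w l.-1 -> did_T1 w (round i t) t.

Lemma Scol_sound t l w : S_sound t -> (1 <= l <= dG)%N ->
  Scol adj dG f h g (st t) (sched t) l -> dist_le adj (sched t) w l.-1 ->
  did_T1 w (round (sched t) t) t.+1.
Proof.
move=> sound l_in; rewrite /Scol l_in andbT.
case T1a: (T1 (st t) (sched t)); last first.
  move=> Sa dist; apply: did_T1_mono (leqnSn t) _.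
  by apply: (sound _ (sched t) l) => //; rewrite inE eqxx orbT.
case: l l_in => [|[|l]] //= l_in col.
  by move/dist_le0->; exact: did_T1_now.
case/dist_leS => [-> | [j aj dist]]; first exact: did_T1_now.
move/forallP/(_ j): col; rewrite inE aj adj_neq //= => Saj.
apply: did_T1_mono (leqnSn t) _; apply: (sound _ j l.+1) => //.
- by rewrite inE aj.
- exact: leq_trans l_in.
Qed.

Lemma S1_sound t i j l w : S_sound t -> j \in Nb adj i -> (1 <= l <= dG)%N ->
  S1 adj dG f h g (st t) (sched t) i l j -> dist_le adj j w l.-1 ->
  did_T1 w (round i t) t.+1.
Proof.
rewrite /S1 => sound j_Ni l_in.
case: ifP => [/andP[/eqP-> /eqP->] | _]; first exact: Scol_sound.
move=> Sij dist; apply: did_T1_mono (leqnSn t) _.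
exact: sound j_Ni l_in Sij dist.
Qed.

Lemma doT2_did_T1 t w : S_sound t -> T2 (st t) (sched t) ->
  did_T1 w (updates (sched t) t) t.+1.
Proof.
move=> sound T2a; rewrite -round_updates ?(doT2_Md T2a) //.
have [row_full _] := andP T2a.
have dG_in : (1 <= dG <= dG)%N by rewrite dG_gt0 leqnn.
have := diam (sched t) w; rewrite -(ltn_predK dG_gt0).
case/dist_leS => [-> | [j aj dist]].
  apply: (S1_sound _ _ (sched t) _ _ sound _ dG_in); last exact: dist_le_refl.
  - by rewrite inE eqxx orbT.
  - by move/forallP/(_ (sched t)): row_full; rewrite inE eqxx orbT.
apply: (S1_sound _ _ _ _ _ sound _ dG_in _ dist); first by rewrite inE aj.
by move/forallP/(_ j): row_full; rewrite inE aj.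
Qed.

Lemma doT2_round_ge t w : S_sound t -> T2 (st t) (sched t) ->
  (updates (sched t) t <= round w t)%N.
Proof. by move=> sound T2a; apply/did_T1_round_le/doT2_did_T1. Qed.

Record invariant t : Prop := Invariant {
  inv_round_le : forall i j, adj i j -> (round i t <= updates j t)%N;
  inv_recv : forall i j, adj i j ->
    recv (st t) i j = (round i t < updates j t)%N;
  inv_updates_le : forall i j, (updates j t <= (round i t).+1)%N;
  inv_S_sound : S_sound t }.

Lemma invariant0 : invariant 0.
Proof.
have [Md0 S0 recv0 _ _] := run.1.
have round0 i : round i 0 = 0%N by rewrite /round Md0.
by split=> [i j _ | i j _ | i j | i j l w _ _]; rewrite ?round0 ?recv0 ?S0.
Qed.

Lemma inv_round_leS t i j : invariant t -> adj i j ->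
  (round i t.+1 <= updates j t.+1)%N.
Proof.
case=> round_le recv_lt _ _ ij; rewrite roundS updatesS.
case reset: rst; last by rewrite addn0 (leq_trans (round_le _ _ ij)) ?leq_addr.
move: reset => /andP[_ /forallP/(_ j)]; rewrite ij /= /recv2.
case/orP => [/andP[/andP[T2a _] /eqP ja] | recv_ij].
  by subst j; rewrite T2a eqxx !addn1 ltnS round_le.
by rewrite recv_lt // in recv_ij; rewrite addn1 (leq_trans recv_ij) ?leq_addr.
Qed.

Lemma inv_recvS t i j : invariant t -> adj i j ->
  recv (st t.+1) i j = (round i t.+1 < updates j t.+1)%N.
Proof.
case=> round_le recv_lt upd_le sound ij; rewrite recv_stS roundS updatesS.
case: rst.
  apply/esym/negbTE; rewrite -leqNgt addn1.
  case: (boolP (T2 (st t) (sched t) && (sched t == j))) =>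
    [/andP[T2a /eqP<-] | _].
    by rewrite addn1 ltnS doT2_round_ge.
  by rewrite addn0 upd_le.
rewrite addn0 /recv2.
case: (boolP (T2 (st t) (sched t) && adj (sched t) i && (j == sched t))).
  case/andP=> /andP[T2a _] /eqP ja; subst j.
  by rewrite T2a eqxx addn1 ltnS round_le.
move=> no_new; have -> : T2 (st t) (sched t) && (sched t == j) = false.
  apply: contraNF no_new => /andP[T2a /eqP aj]; subst j.
  by rewrite T2a adj_sym ij eqxx.
by rewrite addn0 recv_lt.
Qed.

Lemma inv_updates_leS t i j : invariant t ->
  (updates j t.+1 <= (round i t.+1).+1)%N.
Proof.
case=> _ _ upd_le sound; rewrite roundS updatesS.
case: (boolP (T2 (st t) (sched t) && (sched t == j))) =>
  [/andP[T2a /eqP<-] | _].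
  by rewrite addn1 ltnS (leq_trans (doT2_round_ge _ i sound T2a)) ?leq_addr.
by rewrite addn0 (leq_trans (upd_le i j)) // ltnS leq_addr.
Qed.

Lemma inv_S_soundS t : invariant t -> S_sound t.+1.
Proof.
case=> round_le recv_lt _ sound i j l w j_Ni l_in.
rewrite S_stS roundS; case: rst => //; rewrite addn0 /S2.
case: ifP => [/andP[/andP[T2a ai] _] _ _ | _].
  suff -> : round i t = updates (sched t) t by exact: doT2_did_T1.
  by apply/eqP; rewrite eqn_leq doT2_round_ge // round_le // adj_sym.
case: ifP => [|_]; last exact: S1_sound.
case/andP=> /andP[/andP[/andP[T1a ai] /eqP ja] no_recv] _; subst j.
suff -> : round i t = round (sched t) t by exact: Scol_sound.
have ia : adj i (sched t) by rewrite adj_sym.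
rewrite [RHS]round_updates ?(doT1_Md T1a) //; apply/eqP.
by rewrite eqn_leq round_le //= leqNgt -recv_lt.
Qed.

Lemma invariant_all t : invariant t.
Proof.
elim: t => [|t inv]; first exact: invariant0.
split=> [i j | i j | i j |]; [exact: inv_round_leS | exact: inv_recvS |
  exact: inv_updates_leS | exact: inv_S_soundS].
Qed.

Lemma updates_at_T2 t K : T2t t -> count T2t (iota 0 t) = (K * N)%N ->
  forall w, updates w t = K.
Proof.
move=> T2a countK; have [_ _ upd_le sound] := invariant_all t.
apply: (sum_balanced_const _ (updates^~ t) (sched t)).
  move=> w; apply/andP; split.
    exact: leq_trans (doT2_round_ge _ w sound T2a) (round_le_updates w t).
  by rewrite -(round_updates (sched t)) ?(doT2_Md T2a) // upd_le.
by rewrite -count_T2_updates card_ord.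
Qed.

Lemma T1_between k t t' :
  T2t t -> count T2t (iota 0 t) = (k * N)%N ->
  T2t t' -> count T2t (iota 0 t') = (k.+1 * N)%N ->
  forall i, exists u,
    [/\ (t <= u <= t')%N, sched u = i & T1_at adj dG st sched u].
Proof.
move=> T2t1 count1 T2t2 count2 i.
have [_ _ _ sound] := invariant_all t'.
have [u [lt_ut' <- T1u upd_u]] := doT2_did_T1 _ i sound T2t2.
exists u; split=> //; rewrite -[(u <= t')%N]ltnS lt_ut' andbT leqNgt.
apply/negP => /ltnW /(updates_mono (sched u)).
rewrite upd_u (updates_at_T2 _ _ T2t2 count2).
by rewrite (updates_at_T2 _ _ T2t1 count1) ltnn.
Qed.

End ASYMM_run.

Theorem lemma4 (R : realType) (N n : nat) (adj : rel 'I_N) (dG : nat)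
    (f h g : 'I_N -> 'rV[R]_n -> R) (Lc : 'I_N -> R)
    (sched : nat -> 'I_N) (tau : nat -> R) (Tbar : 'I_N -> R)
    (st : nat -> state R N n) :
  (2 <= N)%N ->
  undirected_connected adj ->
  is_diameter adj dG ->
  (forall i, 0 < Lc i) ->
  timing_ok sched tau Tbar ->
  asymm_run adj dG f h g Lc st sched ->
  forall (k tk tk' : nat),
    nth_T2 adj dG f h g st sched (k * N + 1) tk ->
    nth_T2 adj dG f h g st sched (k.+1 * N + 1) tk' ->
    forall i : 'I_N, exists t : nat,
      [/\ (tk <= t <= tk')%N, sched t = i & T1_at adj dG st sched t].
Proof.
move=> N_gt1 [adj_sym adj_irr _] [diam _] _ _ run k tk tk'
  [_ [T2k countk]] [_ [T2k' countk']].
rewrite !addn1 /= in countk countk'.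
exact: (T1_between adj_sym adj_irr (diameter_gt0 _ N_gt1 diam) diam run
  _ _ _ T2k countk T2k' countk').
Qed.
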